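(* The map $\mathrm{End}(\mathbb{F}_p((t))^d)\to M_{d,\mathbb{Z}}(\mathbb{F}_p)$, $A\mapsto (A_{i,j})_{i,j\in\mathbb{Z}}$, is surjective and hence an isomorphism of rings.
   Context: $\mathrm{End}(\mathbb{F}_p((t))^d)$ is the ring of continuous group endomorphisms of $(\mathbb{F}_p((t))^d,+)$. For $n\in\mathbb{Z}$ let $\mathbb{V}_n=\{(a_1t^n,\dots,a_dt^n): a_r\in\mathbb{F}_p\}\cong\mathbb{F}_p^d$ and $\pi_n$ the projection onto $\mathbb{V}_n$ taking $t^n$-coefficients; the block matrix of $A$ is $A_{i,j}=\pi_i\circ A|_{\mathbb{V}_j}$, a $d\times d$ matrix over $\mathbb{F}_p$. $M_{d,\mathbb{Z}}(\mathbb{F}_p)$ is the ring of infinite block matrices $(A_{i,j})_{i,j\in\mathbb{Z}}$ with $d\times d$ blocks over $\mathbb{F}_p$ satisfying: (M1) for each $i$ there is $J_i$ with $A_{i,j}=0$ for $j>J_i$; (M2) for each $j$ there is $I_j$ with $A_{i,j}=0$ for $i<I_j$; (M3) there are $I,J$ with $A_{i,j}=0$ whenever $i<I$ and $j>J$; it is known that the block matrix of every continuous endomorphism lies in $M_{d,\mathbb{Z}}(\mathbb{F}_p)$ and that this map is a ring homomorphism. *)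

From HB Require Import structures.
From mathcomp Require Import all_boot all_order all_algebra.
Set Implicit Arguments. Unset Strict Implicit. Unset Printing Implicit Defensive.
Import Order.TTheory GRing.Theory Num.Theory.
Local Open Scope ring_scope.

(* An element of (F_p((t)))^d is encoded as its coefficient sequence
   x : int -> 'rV['F_p]_d, where x n = (t^n-coefficients of the d coordinates),
   subject to the Laurent condition (coefficients vanish below some index). *)
Definition seqv (p d : nat) := int -> 'rV['F_p]_d.

Definition laurent (p d : nat) (x : seqv p d) : Prop :=
  exists N : int, forall n : int, n < N -> x n = 0.

(* continuous group endomorphisms of (F_p((t))^d, +) for the t-adic topology:
   A maps Laurent series to Laurent series, is additive, and is continuous
   (for each x and each precision M there is a precision N such that
   agreement with x below index N forces agreement of images below M). *)
Definition is_cont_end (p d : nat) (A : seqv p d -> seqv p d) : Prop :=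
  [/\ (forall x, laurent x -> laurent (A x)),
      (forall x y, laurent x -> laurent y ->
         A (fun n => x n + y n) = (fun n => A x n + A y n)) &
      (forall x, laurent x -> forall M : int, exists N : int,
         forall y, laurent y -> (forall n, n < N -> y n = x n) ->
           forall n, n < M -> A y n = A x n)].

(* the element v t^j of V_j *)
Definition mono (p d : nat) (j : int) (v : 'rV['F_p]_d) : seqv p d :=
  fun n => if n == j then v else 0.

(* block A_{i,j} = pi_i o A |_{V_j}, as a d x d matrix acting on column
   coordinates: entry (r,s) is the r-th coordinate of the t^i-coefficient
   of A (e_s t^j). *)
Definition blk (p d : nat) (A : seqv p d -> seqv p d) (i j : int) : 'M['F_p]_d :=
  \matrix_(r < d, s < d) A (mono j (delta_mx 0 s)) i 0 r.

(* the ring M_{d,Z}(F_p): conditions (M1), (M2), (M3) *)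
Definition in_MdZ (p d : nat) (B : int -> int -> 'M['F_p]_d) : Prop :=
  [/\ (forall i : int, exists J : int, forall j : int, J < j -> B i j = 0),
      (forall j : int, exists I : int, forall i : int, i < I -> B i j = 0) &
      (exists I J : int, forall i j : int, i < I -> J < j -> B i j = 0)].

From HB Require Import structures.
From mathcomp Require Import all_boot all_order all_algebra zify.
From Stdlib Require Import ClassicalEpsilon FunctionalExtensionality.
Import Order.TTheory GRing.Theory Num.Theory.
Set Implicit Arguments. Unset Strict Implicit. Unset Printing Implicit Defensive.
Local Open Scope ring_scope.

(* A continuous additive endomorphism of F_p((t))^d is F_p-linear, since every
   scalar is a natural multiple of 1; so it is determined on the monomials
   v t^j by its blocks, on finitely supported series by additivity, and on
   every Laurent series by continuity, as the t^i-coefficient of A x only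
   depends on a truncation of x.  Conversely, a block matrix B acts by
   (A x)_i = sum_j B_{i,j} x_j, a finite sum by (M1) and the Laurent condition
   on x; (M2) and (M3) make A x a Laurent series again, and (M3) together
   with (M1) gives continuity. *)


Section LaurentSequences.

Variables p d : nat.
Implicit Types (x y : seqv p d) (v : 'rV['F_p]_d).

Lemma laurent0 : laurent (fun _ : int => 0 : 'rV['F_p]_d).
Proof. by exists 0. Qed.

Lemma laurentD x y : laurent x -> laurent y -> laurent (fun n => x n + y n).
Proof.
move=> [N1 x0] [N2 y0]; exists (Num.min N1 N2) => n n_lt.
by rewrite x0 ?y0 ?addr0 //; lia.
Qed.

Lemma laurent_sum (I : Type) (r : seq I) (f : I -> seqv p d) :
  (forall i, laurent (f i)) -> laurent (fun n => \sum_(i <- r) f i n).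
Proof.
move=> lf; elim: r => [|i r IH].
  by exists 0 => n _; rewrite big_nil.
have -> : (fun n => \sum_(k <- i :: r) f k n) = (fun n => f i n + \sum_(k <- r) f k n).
  by apply: functional_extensionality => n; rewrite big_cons.
exact: laurentD.
Qed.

Lemma mono_laurent j v : laurent (mono j v).
Proof. by exists j => n n_lt; rewrite /mono; case: eqP => // ?; lia. Qed.

Lemma mono_sum (I : Type) (r : seq I) j (u : I -> 'rV['F_p]_d) :
  mono j (\sum_(i <- r) u i) = (fun n => \sum_(i <- r) mono j (u i) n).
Proof.
apply: functional_extensionality => n; rewrite /mono.
by case: eqP => // _; rewrite big1.
Qed.

Lemma finite_support_mono_sum y (L : int) (K : nat) :
  (forall j, j < L \/ L + K%:Z <= j -> y j = 0) ->
  y = (fun n => \sum_(k < K) mono (L + k%:Z) (y (L + k%:Z)) n).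
Proof.
move=> y0; apply: functional_extensionality => n; rewrite /mono.
have [/andP[Ln nLK]|out] := boolP ((L <= n) && (n < L + K%:Z)).
  have k_lt : (`|n - L| < K)%N by lia.
  rewrite (bigD1 (Ordinal k_lt)) //= big1 => [|k /eqP k_neq].
    by rewrite (_ : L + `|n - L|%:Z = n) ?eqxx ?addr0 //; lia.
  by case: eqP => // n_eq; case: k_neq; apply: val_inj => /=; lia.
move: out; rewrite negb_and -ltNge -leNgt => out.
rewrite y0 ?big1 // => [k _|]; last by case/orP: out; lia.
by case: eqP => // ?; have := ltn_ord k; case/orP: out; lia.
Qed.

(* Some index below which a Laurent series vanishes; junk value 0 otherwise. *)
Definition lbound x : int :=
  match excluded_middle_informative (laurent x) with
  | left lx => proj1_sig (constructive_indefinite_description _ lx)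
  | right _ => 0
  end.

Lemma lboundP x : laurent x -> forall n, n < lbound x -> x n = 0.
Proof.
rewrite /lbound => lx; case: excluded_middle_informative => // lx'.
by case: constructive_indefinite_description.
Qed.

End LaurentSequences.

Section ContinuousEndomorphisms.

Variables p d : nat.
Variable A : seqv p d -> seqv p d.
Hypothesis endA : is_cont_end A.

Lemma cont_endD (x y : seqv p d) : laurent x -> laurent y ->
  A (fun n => x n + y n) = (fun n => A x n + A y n).
Proof. by case: endA => _ addA _; exact: addA. Qed.

Lemma cont_end0 : A (fun _ => 0) = (fun _ => 0).
Proof.
apply: functional_extensionality => n.
have := congr1 (fun f => f n) (cont_endD (@laurent0 p d) (@laurent0 p d)).
rewrite /= (_ : (fun _ => _) = (fun _ => 0)); last first.
  by apply: functional_extensionality => ?; rewrite addr0.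
by move/(canLR (addrK (A (fun _ => 0) n))); rewrite subrr.
Qed.

Lemma cont_end_sum (I : Type) (r : seq I) (f : I -> seqv p d) :
  (forall i, laurent (f i)) ->
  A (fun n => \sum_(i <- r) f i n) = (fun n => \sum_(i <- r) A (f i) n).
Proof.
move=> lf; elim: r => [|i r IH].
  have -> : (fun n => \sum_(k <- [::]) f k n) = (fun _ => 0).
    by apply: functional_extensionality => n; rewrite big_nil.
  by rewrite cont_end0; apply: functional_extensionality => n; rewrite big_nil.
have -> : (fun n => \sum_(k <- i :: r) f k n) = (fun n => f i n + \sum_(k <- r) f k n).
  by apply: functional_extensionality => n; rewrite big_cons.
rewrite cont_endD ?IH //; last exact: laurent_sum.
by apply: functional_extensionality => n; rewrite big_cons.
Qed.

Lemma cont_end_mono j (v : 'rV['F_p]_d) i :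
  A (mono j v) i = v *m (blk A i j)^T.
Proof.
have monoMn u c : A (mono j (u *+ c)) i = A (mono j u) i *+ c.
  have -> : u *+ c = \sum_(k < c) u by rewrite sumr_const card_ord.
  rewrite mono_sum cont_end_sum; last by move=> ?; exact: mono_laurent.
  by rewrite sumr_const card_ord.
rewrite {1}(row_sum_delta v) mono_sum cont_end_sum; last by move=> ?; exact: mono_laurent.
rewrite mulmx_sum_row; apply: eq_bigr => s _.
rewrite -[v 0 s]natr_Zp !scaler_nat monoMn; congr (_ *+ _).
by apply/rowP => r; rewrite !mxE; congr (A _ i _ r); apply/rowP => k; rewrite !mxE.
Qed.

End ContinuousEndomorphisms.

Section Injectivity.

Variables (p d : nat) (A A' : seqv p d -> seqv p d).
Hypotheses (endA : is_cont_end A) (endA' : is_cont_end A').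
Hypothesis eq_blk : forall i j, blk A i j = blk A' i j.

Lemma eq_cont_end_mono j v : A (mono j v) = A' (mono j v).
Proof.
by apply: functional_extensionality => i; rewrite !cont_end_mono // eq_blk.
Qed.

Lemma eq_cont_end_finite_support (y : seqv p d) (L : int) (K : nat) :
  (forall j, j < L \/ L + K%:Z <= j -> y j = 0) -> A y = A' y.
Proof.
move=> /finite_support_mono_sum ->.
rewrite !cont_end_sum //; try by move=> ?; exact: mono_laurent.
by apply: functional_extensionality => n; apply: eq_bigr => k _; rewrite eq_cont_end_mono.
Qed.

Lemma eq_cont_end (x : seqv p d) : laurent x -> A x = A' x.
Proof.
move=> lx; apply: functional_extensionality => n.
have [N0 x0] := lx.
have [_ _ contA] := endA; have [_ _ contA'] := endA'.
have [N1 near1] := contA x lx (n + 1); have [N2 near2] := contA' x lx (n + 1).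
pose N := Num.max N1 N2.
pose y j := if j < N then x j else 0.
have ly : laurent y by exists N0 => j j_lt; rewrite /y x0 ?if_same //; lia.
have y_eq M : M <= N -> forall j, j < M -> y j = x j.
  by move=> M_le j j_lt; rewrite /y ifT //; lia.
have <- : A y n = A x n by apply: (near1 y ly (y_eq _ _)); lia.
have <- : A' y n = A' x n by apply: (near2 y ly (y_eq _ _)); lia.
rewrite (@eq_cont_end_finite_support y N0 `|N - N0|) // => j j_out.
by rewrite /y; case: ifP => // j_lt; apply: x0; lia.
Qed.

End Injectivity.

Section WindowSums.

Variables (V : zmodType) (t : int -> V).

Lemma sum_window_shift (U : int) (K m : nat) : (forall j, U < j -> t j = 0) ->
  \sum_(k < K) t (U - k%:Z) = \sum_(k < K + m) t (U + m%:Z - k%:Z).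
Proof.
move=> t0; elim: m => [|m IH]; first by rewrite addn0 addr0.
rewrite addnS big_ord_recl /= t0 1?add0r; last by lia.
by rewrite IH; apply: eq_bigr => k _; congr t; rewrite /bump add1n; lia.
Qed.

Lemma sum_window_extend (U : int) (K m : nat) :
  (forall k : nat, (K <= k)%N -> t (U - k%:Z) = 0) ->
  \sum_(k < K) t (U - k%:Z) = \sum_(k < K + m) t (U - k%:Z).
Proof.
move=> t0; elim: m => [|m IH]; first by rewrite addn0.
by rewrite addnS big_ord_recr /= t0 ?addr0 ?leq_addr.
Qed.

Lemma eq_sum_window (N J U U' : int) (K K' : nat) :
  (forall j, j < N \/ J < j -> t j = 0) ->
  J <= U -> J <= U' -> U - K%:Z < N -> U' - K'%:Z < N ->
  \sum_(k < K) t (U - k%:Z) = \sum_(k < K') t (U' - k%:Z).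
Proof.
move=> t0 JU JU' UK UK'; pose W := Num.max U U'.
have shiftW (X : int) (L : nat) : J <= X -> X <= W ->
    \sum_(k < L) t (X - k%:Z) = \sum_(k < L + `|W - X|) t (W - k%:Z).
  move=> JX XW; rewrite (@sum_window_shift X L `|W - X|) => [|j ?]; last by apply: t0; lia.
  by rewrite (_ : X + _ = W) //; lia.
have extendW (L L' : nat) : W - L%:Z < N ->
    \sum_(k < L) t (W - k%:Z) = \sum_(k < L + L') t (W - k%:Z).
  by move=> WL; apply: sum_window_extend => k ?; apply: t0; lia.
rewrite (shiftW U K) 1?(shiftW U' K'); try lia.
set a := (K + _)%N; set a' := (K' + _)%N.
rewrite (extendW a a') 1?(extendW a' a) 1?addnC //; lia.
Qed.

End WindowSums.

Lemma eventually_below_range (P : int -> int -> Prop) (N : int) (k : nat) :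
  (forall j, exists I, forall i, i < I -> P i j) ->
  exists M, forall j, N <= j <= N + k%:Z -> forall i, i < M -> P i j.
Proof.
move=> colP; elim: k => [|k [M PM]].
  have [I PI] := colP N; exists I => j /andP[? ?] i ?.
  by rewrite (_ : j = N); [exact: PI | lia].
have [I PI] := colP (N + k.+1%:Z); exists (Num.min M I) => j /andP[? ?] i ?.
have [jk|] := boolP (j <= N + k%:Z); first by apply: PM; [apply/andP; split|]; lia.
by rewrite -ltNge => ?; rewrite (_ : j = N + k.+1%:Z); [apply: PI | ]; lia.
Qed.

Lemma bounded_on_range (f : int -> int) (N : int) (k : nat) :
  exists Q, forall j, N <= j <= N + k%:Z -> f j <= Q.
Proof.
elim: k => [|k [Q fQ]].
  by exists (f N) => j /andP[? ?]; rewrite (_ : j = N) //; lia.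
exists (Num.max Q (f (N + k.+1%:Z))) => j /andP[? ?].
have [jk|] := boolP (j <= N + k%:Z); first by have := fQ j; rewrite jk andbT; lia.
by rewrite -ltNge => ?; rewrite (_ : j = N + k.+1%:Z); lia.
Qed.

Section BlockOperator.

Variables (p d : nat) (B : int -> int -> 'M['F_p]_d) (J : int -> int).
Hypothesis B_row_bound : forall i j, J i < j -> B i j = 0.

(* Coefficients are row vectors, so the block B_{n,j} acts by its transpose. *)
Definition blk_op (x : seqv p d) : seqv p d := fun n =>
  \sum_(k < `|J n - lbound x|.+1) x (J n - k%:Z) *m (B n (J n - k%:Z))^T.

Lemma blk_op_window (x : seqv p d) (N : int) n (U : int) (K : nat) :
  (forall j, j < N -> x j = 0) -> J n <= U -> U - K%:Z < N ->
  blk_op x n = \sum_(k < K) x (U - k%:Z) *m (B n (U - k%:Z))^T.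
Proof.
move=> x0 JU UK; have lx : laurent x by exists N.
apply: (@eq_sum_window _ (fun j => x j *m (B n j)^T) (Num.max N (lbound x)) (J n)).
- move=> j [j_lt|J_lt]; last by rewrite B_row_bound // trmx0 mulmx0.
  suff -> : x j = 0 by rewrite mul0mx.
  by have [/x0|] := ltP j N; last by move=> ?; apply: lboundP => //; lia.
all: lia.
Qed.

Lemma blk_op_eq (x y : seqv p d) n (R : int) : laurent x -> laurent y ->
  (forall j, R < j -> B n j = 0) -> (forall j, j <= R -> x j = y j) ->
  blk_op x n = blk_op y n.
Proof.
move=> lx ly BR xy; pose N := Num.min (lbound x) (lbound y).
have window z : laurent z -> N <= lbound z ->
    blk_op z n = \sum_(k < `|J n - N|.+1) z (J n - k%:Z) *m (B n (J n - k%:Z))^T.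
  move=> lz Nz; apply: (blk_op_window (N := N)) => //; last by lia.
  by move=> j ?; apply: lboundP => //; lia.
rewrite !window //; try lia; apply: eq_bigr => k _.
have [jR|Rj] := leP (J n - k%:Z) R; first by rewrite xy.
by rewrite BR // trmx0 !mulmx0.
Qed.

Lemma blk_opD (x y : seqv p d) : laurent x -> laurent y ->
  blk_op (fun n => x n + y n) = (fun n => blk_op x n + blk_op y n).
Proof.
move=> lx ly; apply: functional_extensionality => n.
pose N := Num.min (lbound x) (lbound y).
have x0 j : j < N -> x j = 0 by move=> ?; apply: lboundP => //; lia.
have y0 j : j < N -> y j = 0 by move=> ?; apply: lboundP => //; lia.
have xy0 j : j < N -> x j + y j = 0 by move=> ?; rewrite x0 ?y0 ?addr0.
have Jn_le : J n <= J n by [].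
have K_lt : J n - `|J n - N|.+1%:Z < N by lia.
rewrite (blk_op_window xy0 Jn_le K_lt) (blk_op_window x0 Jn_le K_lt).
rewrite (blk_op_window y0 Jn_le K_lt) -big_split /=.
by apply: eq_bigr => k _; rewrite mulmxDl.
Qed.

Lemma blk_blk_op i j : blk blk_op i j = B i j.
Proof.
apply/matrixP => r s; rewrite !mxE.
pose U := Num.max (J i) j.
have e0 n : n < j -> mono j (delta_mx 0 s) n = 0 :> 'rV['F_p]_d.
  by move=> ?; rewrite /mono; case: eqP => // ?; lia.
rewrite (@blk_op_window _ _ i U `|U - j|.+1 e0); try lia.
rewrite (bigD1 (Ordinal (ltnSn `|U - j|))) //= big1 => [|k k_neq].
  rewrite (_ : U - _ = j); last by lia.
  by rewrite addr0 /mono eqxx -rowE !mxE.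
rewrite /mono; case: eqP => [k_eq|]; last by rewrite mul0mx.
by case/eqP: k_neq; apply: val_inj => /=; lia.
Qed.

Section CornerBound.

Variables I0 J0 : int.
Hypothesis B_corner : forall i j, i < I0 -> J0 < j -> B i j = 0.

Lemma blk_op_laurent (x : seqv p d) :
  (forall j, exists I, forall i, i < I -> B i j = 0) ->
  laurent x -> laurent (blk_op x).
Proof.
move=> B_col lx; pose L := lbound x.
have [M BM] := eventually_below_range L `|J0 - L| B_col.
exists (Num.min M I0) => n n_lt; rewrite /blk_op big1 // => k _.
set j := J n - k%:Z.
have [jL|Lj] := ltP j L; first by rewrite lboundP // mul0mx.
have [J0j|jJ0] := ltP J0 j; first by rewrite B_corner ?trmx0 ?mulmx0 //; lia.
by rewrite BM ?trmx0 ?mulmx0 //; [apply/andP; split | ]; lia.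
Qed.

(* Rows below I0 only meet columns up to J0 by (M3); the finitely many rows
   in [I0, M) have their own column bounds J. *)
Lemma blk_op_continuous (x : seqv p d) (M : int) : laurent x ->
  exists N, forall y, laurent y -> (forall n, n < N -> y n = x n) ->
    forall n, n < M -> blk_op y n = blk_op x n.
Proof.
move=> lx; have [Q JQ] := bounded_on_range J I0 `|M - I0|.
exists (Num.max J0 Q + 1) => y ly yx n n_lt.
apply: (@blk_op_eq _ _ _ (Num.max J0 Q)) => // [j j_gt|j j_le]; last first.
  by apply: yx; lia.
have [nI0|I0n] := ltP n I0; first by apply: B_corner; lia.
have JnQ : J n <= Q by apply: JQ; apply/andP; split; lia.
by apply: B_row_bound; lia.
Qed.

End CornerBound.

Lemma blk_op_cont_end : in_MdZ B -> is_cont_end blk_op.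
Proof.
case=> _ B_col [I0 [J0 B_corner]]; split.
- by move=> x; exact: (blk_op_laurent B_corner).
- exact: blk_opD.
- by move=> x lx M; exact: (blk_op_continuous B_corner).
Qed.

End BlockOperator.

Lemma blk_surjective p d (B : int -> int -> 'M['F_p]_d) : in_MdZ B ->
  exists A : seqv p d -> seqv p d, is_cont_end A /\ forall i j, blk A i j = B i j.
Proof.
move=> MB; have [B_row _ _] := MB.
pose J i := proj1_sig (constructive_indefinite_description _ (B_row i)).
have B_row_bound i j : J i < j -> B i j = 0.
  by rewrite /J; case: constructive_indefinite_description => /= Ji; apply.
exists (blk_op B J); split; first exact: blk_op_cont_end.
exact: blk_blk_op.
Qed.

Theorem mainTheorem8 (p d : nat) (pr_p : prime p) :
  (forall B : int -> int -> 'M['F_p]_d, in_MdZ B ->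
     exists A : seqv p d -> seqv p d,
       is_cont_end A /\ forall i j : int, blk A i j = B i j) /\
  (forall A A' : seqv p d -> seqv p d, is_cont_end A -> is_cont_end A' ->
     (forall i j : int, blk A i j = blk A' i j) ->
     forall x : seqv p d, laurent x -> A x = A' x).
Proof. by split; [exact: blk_surjective | exact: eq_cont_end]. Qed.
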